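(* Let $G$ be a $(P_5,\text{chair})$-free graph and let $C=v_1v_2v_3v_4v_5v_1$ be an induced $C_5$ in $G$. Let $1\le i\le 5$, let $u,v\in S_4(i)$ with $uv\notin E(G)$, and let $s\in S^1_3(i)\cup S_4(i+2)\cup S_4(i-2)$. Then $s$ is either adjacent to both $u$ and $v$ or to neither.
   Context: All graphs are finite and simple; $P_5$ is the path on 5 vertices; the chair is a $P_4$ plus a vertex adjacent to exactly one of the two middle vertices of the $P_4$; ''$H$-free'' means no induced subgraph isomorphic to $H$. Indices modulo 5; for $v\notin V(C)$ let $N_C(v)=N(v)\cap V(C)$. $S^1_3(j)=\{v\notin V(C): N_C(v)=\{v_{j-1},v_j,v_{j+1}\}\}$, $S_4(j)=\{v\notin V(C): N_C(v)=\{v_{j-2},v_{j-1},v_{j+1},v_{j+2}\}\}$. *)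

From mathcomp Require Import all_boot.
Set Implicit Arguments. Unset Strict Implicit. Unset Printing Implicit Defensive.

Definition simple_graph (T : finType) (adj : rel T) : Prop :=
  symmetric adj /\ irreflexive adj.

Definition induced_copy (T : finType) (adj : rel T) (k : nat)
  (H : rel 'I_k) (f : 'I_k -> T) : Prop :=
  injective f /\ forall a b : 'I_k, a != b -> adj (f a) (f b) = H a b.

Definition contains_induced (T : finType) (adj : rel T) (k : nat)
  (H : rel 'I_k) : Prop := exists f : 'I_k -> T, induced_copy adj H f.

Definition H_free (T : finType) (adj : rel T) (k : nat) (H : rel 'I_k) : Prop :=
  ~ contains_induced adj H.

Definition P5_rel : rel 'I_5 :=
  fun a b => ((a : nat) == b.+1) || ((b : nat) == a.+1).

(* chair : P_4 = 0-1-2-3 plus vertex 4 adjacent only to 1 (a middle vertex) *)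
Definition chair_rel : rel 'I_5 :=
  fun a b =>
    [|| ((a : nat) < 4) && ((b : nat) < 4) && (((a : nat) == b.+1) || ((b : nat) == a.+1)),
        ((a : nat) == 4) && ((b : nat) == 1) |
        ((a : nat) == 1) && ((b : nat) == 4)].

Definition C5_rel : rel 'I_5 :=
  fun a b => ((a : nat) == (b.+1 %% 5)) || ((b : nat) == (a.+1 %% 5)).

Definition idx5 (j : 'I_5) (d : nat) : 'I_5 := inord ((j + d) %% 5).

Section Cyc.
Variables (T : finType) (adj : rel T) (c : 'I_5 -> T).

Definition VC : {set T} := [set c k | k : 'I_5].

Definition NC (v : T) : {set T} := [set x in VC | adj v x].

(* S^1_3(j): v ∉ V(C), N_C(v) = {v_{j-1}, v_j, v_{j+1}} *)
Definition S13 (j : 'I_5) : {set T} :=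
  [set v | (v \notin VC) && (NC v == [set c (idx5 j 4); c j; c (idx5 j 1)])].

(* S_4(j): v ∉ V(C), N_C(v) = {v_{j-2}, v_{j-1}, v_{j+1}, v_{j+2}} *)
Definition S4 (j : 'I_5) : {set T} :=
  [set v | (v \notin VC) &&
     (NC v == [set c (idx5 j 3); c (idx5 j 4); c (idx5 j 1); c (idx5 j 2)])].
End Cyc.

From mathcomp Require Import all_boot.

Set Implicit Arguments.
Unset Strict Implicit.
Unset Printing Implicit Defensive.

(* Every vertex of S_4(i) sees c_j for j <> i but not c_i.  Each s in
   S^1_3(i), S_4(i+2) or S_4(i-2) sees c_i but misses c_j for j = i+2 or
   j = i-2, and c_i c_j is a non-edge of the cycle.  So if s ~ u and s !~ v,
   then c_i - s - u - c_j - v is an induced P_5. *)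

Lemma val_idx5 (j : 'I_5) d : idx5 j d = (j + d) %% 5 :> nat.
Proof. by rewrite /idx5 inordK // ltn_pmod. Qed.

Lemma idx5_0 (j : 'I_5) : idx5 j 0 = j.
Proof. by apply/val_inj; rewrite /= val_idx5 addn0 modn_small. Qed.

Lemma idx5_eq (j : 'I_5) d e : d < 5 -> e < 5 ->
  (idx5 j d == idx5 j e) = (d == e).
Proof.
by move=> d5 e5; rewrite -val_eqE /= !val_idx5 eqn_modDl !modn_small.
Qed.

Lemma idx5_eq0 (j : 'I_5) d : d < 5 -> (idx5 j d == j) = (d == 0).
Proof. by move=> d5; rewrite -{2}(idx5_0 j) idx5_eq. Qed.

Lemma idx5_neq (j : 'I_5) d : 0 < d < 5 -> idx5 j d != j.
Proof. by case/andP=> d0 d5; rewrite idx5_eq0 // -lt0n. Qed.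

Lemma idx5P (j k : 'I_5) : {d : nat | d < 5 & k = idx5 j d}.
Proof.
exists ((k + 5 - j) %% 5); first exact: ltn_pmod.
apply/val_inj; rewrite /= val_idx5 modnDmr subnKC; last exact: ltnW (ltn_addl _ (ltn_ord j)).
by rewrite modnDr modn_small.
Qed.

Lemma C5_rel_idx5 (j : 'I_5) d : d < 5 -> C5_rel j (idx5 j d) = (d == 1) || (d == 4).
Proof.
rewrite /C5_rel /= val_idx5.
by case: j => [[|[|[|[|[|j]]]]] //= _]; case: d => [|[|[|[|[|d]]]]].
Qed.

Section InducedP5.

Variables (T : finType) (adj : rel T).
Hypotheses (adj_sym : symmetric adj) (adj_irr : irreflexive adj).

Lemma adj_neq x y : adj x y -> x != y.
Proof. by apply: contraTneq => ->; rewrite adj_irr. Qed.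

Lemma neq_of_adj_nadj x y z : adj x z -> ~~ adj y z -> x != y.
Proof. by move=> xz; apply: contraNneq => <-. Qed.

Lemma induced_copy_ltn k (H : rel 'I_k) (f : 'I_k -> T) :
  symmetric H -> injective f ->
  (forall a b : 'I_k, a < b -> adj (f a) (f b) = H a b) -> induced_copy adj H f.
Proof.
move=> H_sym f_inj f_lt; split=> // a b; rewrite -val_eqE neq_ltn => /orP[] ab.
  exact: f_lt.
by rewrite adj_sym H_sym f_lt.
Qed.

Lemma P5_rel_sym : symmetric P5_rel.
Proof. by move=> a b; rewrite /P5_rel orbC. Qed.

Lemma induced_P5_path (a b c d e : T) :
  H_free adj P5_rel ->
  adj a b -> adj b c -> adj c d -> adj d e ->
  ~~ adj a c -> ~~ adj a d -> ~~ adj a e -> ~~ adj b d -> ~~ adj b e ->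
  ~~ adj c e -> False.
Proof.
move=> P5_free ab bc cd de ac ad ae bd be ce.
have ba : adj b a by rewrite adj_sym.
have cb : adj c b by rewrite adj_sym.
have dc : adj d c by rewrite adj_sym.
have ed : adj e d by rewrite adj_sym.
have path_uniq : uniq [:: a; b; c; d; e].
  rewrite /= !inE !negb_or !andbT; repeat (apply/andP; split).
  - exact: adj_neq ab.
  - by rewrite eq_sym (neq_of_adj_nadj cd).
  - by rewrite eq_sym (neq_of_adj_nadj dc).
  - by rewrite eq_sym (neq_of_adj_nadj ed).
  - exact: adj_neq bc.
  - by rewrite eq_sym (neq_of_adj_nadj de).
  - by rewrite eq_sym (neq_of_adj_nadj ed).
  - exact: adj_neq cd.
  - by rewrite (neq_of_adj_nadj cb) // adj_sym.
  - exact: adj_neq de.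
apply: P5_free; exists (nth a [:: a; b; c; d; e]).
apply: induced_copy_ltn P5_rel_sym _ _.
  by move=> i j /eqP; rewrite nth_uniq // => /eqP/val_inj.
move: ac ad ae bd be ce => /negbTE ac /negbTE ad /negbTE ae /negbTE bd /negbTE be /negbTE ce.
by move=> [[|[|[|[|[|?]]]]] ?] [[|[|[|[|[|?]]]]] ?].
Qed.

End InducedP5.

Section CycleNeighbourhoods.

Variables (T : finType) (adj : rel T) (c : 'I_5 -> T).
Hypothesis c_inj : injective c.

Lemma adj_cycleE x k : adj x (c k) = (c k \in NC adj c x).
Proof. by rewrite inE imset_f. Qed.

Lemma S4_adj j x k : x \in S4 adj c j -> adj x (c k) = (k != j).
Proof.
rewrite inE => /andP[_ /eqP NCx]; have [d d5 ->] := idx5P j k.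
rewrite adj_cycleE NCx !inE !(inj_eq c_inj) !idx5_eq // idx5_eq0 //.
by case: d d5 => [|[|[|[|[|]]]]].
Qed.

Lemma S13_adj j x d : x \in S13 adj c j -> d < 5 ->
  adj x (c (idx5 j d)) = (d \in [:: 4; 0; 1]).
Proof.
rewrite inE => /andP[_ /eqP NCx] d5.
by rewrite adj_cycleE NCx !inE !(inj_eq c_inj) idx5_eq0 // !idx5_eq // orbA.
Qed.

Hypothesis c_adj : forall a b, a != b -> adj (c a) (c b) = C5_rel a b.

Lemma cycle_adj_idx5 j d : 0 < d < 5 ->
  adj (c j) (c (idx5 j d)) = (d == 1) || (d == 4).
Proof.
by case/andP=> d0 d5; rewrite c_adj ?C5_rel_idx5 // eq_sym idx5_neq ?d0.
Qed.

Lemma cycle_vertex_separating i s :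
  s \in S13 adj c i :|: S4 adj c (idx5 i 2) :|: S4 adj c (idx5 i 3) ->
  exists j, [/\ j != i, ~~ adj (c i) (c j), adj s (c i) & ~~ adj s (c j)].
Proof.
have far_cycle d : 1 < d < 4 -> ~~ adj (c i) (c (idx5 i d)).
  by case: d => [|[|[|[|[|d]]]]] // _; rewrite cycle_adj_idx5.
rewrite !in_setU -orbA => /or3P[] Hs; [exists (idx5 i 2) | exists (idx5 i 2) | exists (idx5 i 3)].
- by rewrite idx5_neq // far_cycle // (S13_adj Hs) // -[i in c i]idx5_0 (S13_adj Hs).
all: by rewrite idx5_neq // far_cycle // !(S4_adj _ Hs) eqxx eq_sym idx5_neq.
Qed.

Hypotheses (adj_sym : symmetric adj) (adj_irr : irreflexive adj).
Hypothesis P5_free : H_free adj P5_rel.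

Lemma S4_nonadj_pair_transfer i j u v s :
  j != i -> ~~ adj (c i) (c j) -> adj s (c i) -> ~~ adj s (c j) ->
  u \in S4 adj c i -> v \in S4 adj c i -> ~~ adj u v -> adj s u -> adj s v.
Proof.
move=> ji ij si sj Hu Hv uv su; apply/negPn/negP => sv.
have [uj vj] : adj u (c j) /\ adj v (c j) by rewrite (S4_adj _ Hu) (S4_adj _ Hv).
have [ui vi] : ~~ adj u (c i) /\ ~~ adj v (c i).
  by rewrite (S4_adj _ Hu) (S4_adj _ Hv) eqxx.
apply: (induced_P5_path adj_sym adj_irr P5_free (_ : adj (c i) s) su uj (_ : adj (c j) v)).
all: by rewrite // adj_sym.
Qed.

End CycleNeighbourhoods.

Theorem mainTheorem10 (T : finType) (adj : rel T) (c : 'I_5 -> T) :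
  simple_graph adj ->
  H_free adj P5_rel -> H_free adj chair_rel ->
  induced_copy adj C5_rel c ->
  forall (i : 'I_5) (u v s : T),
    u \in S4 adj c i -> v \in S4 adj c i -> ~~ adj u v ->
    s \in S13 adj c i :|: S4 adj c (idx5 i 2) :|: S4 adj c (idx5 i 3) ->
    adj s u = adj s v.
Proof.
move=> [adj_sym adj_irr] P5_free _ [c_inj c_adj] i u v s Hu Hv uv Hs.
have [j [ji ij si sj]] := cycle_vertex_separating c_inj c_adj Hs.
have transfer := S4_nonadj_pair_transfer c_inj adj_sym adj_irr P5_free ji ij si sj.
by apply/idP/idP; apply: transfer; rewrite // adj_sym.
Qed.
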